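(* Let $T$ be a tree on $n$ vertices and let $u$ be a vertex of maximum degree in $T$. Suppose $u_1,u_2$ are two distinct neighbours of $u$ such that $u_1$ has exactly $d_1$ neighbours other than $u$, all of them pendant vertices, and $u_2$ has exactly $d_2$ neighbours other than $u$, all of them pendant vertices (so $T$ consists of a subtree $T_1$ containing $u$, together with the paths $u u_1$, $uu_2$ and the pendant vertices attached to $u_1$ and $u_2$). Let $w$ be a pendant neighbour of $u_2$ and let $T'=T-u_2w+u_1w$. If $d_1\geq d_2\geq 1$, then $e^{M_2}(T)<e^{M_2}(T')$.
   Context: For a tree $G$ with edge set $E(G)$ and vertex degrees $d_G(v)$, the exponential of the second Zagreb index is $e^{M_2}(G)=\sum_{uv\in E(G)} e^{d_G(u)d_G(v)}$. A pendant vertex is a vertex of degree 1. *)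

From HB Require Import structures.
From mathcomp Require Import all_boot all_order all_algebra.
From mathcomp Require Import reals sequences exp.
Set Implicit Arguments. Unset Strict Implicit. Unset Printing Implicit Defensive.
Import Order.TTheory GRing.Theory Num.Theory.

Section Graphs.
Variable V : finType.

Definition simple_edges (E : {set {set V}}) : Prop :=
  forall e, e \in E -> #|e| = 2.

Definition adj (E : {set {set V}}) : rel V :=
  fun x y => (x != y) && ([set x; y] \in E).

Definition deg (E : {set {set V}}) (v : V) : nat :=
  #|[set e in E | v \in e]|.

Definition connected (E : {set {set V}}) : Prop :=
  forall x y : V, connect (adj E) x y.

(* acyclic: no edge lies on a cycle, i.e. removing any edge {x,y}
   disconnects x from y *)
Definition acyclic (E : {set {set V}}) : Prop :=
  forall x y : V, x != y -> [set x; y] \in E ->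
    ~~ connect (adj (E :\ [set x; y])) x y.

Definition is_tree (E : {set {set V}}) : Prop :=
  [/\ simple_edges E, connected E & acyclic E].

(* exponential of the second Zagreb index:
   sum over edges uv of e^{d(u) d(v)}; for a 2-set e = {u,v} the product
   \prod_(v in e) deg v is d(u) d(v). *)
Definition eM2 (R : realType) (E : {set {set V}}) : R :=
  \sum_(e in E) expR ((\prod_(v in e) deg E v)%N)%:R.

End Graphs.

From mathcomp Require Import all_boot all_order all_algebra.
From mathcomp Require Import reals sequences exp.
From mathcomp Require Import lra.
Set Implicit Arguments. Unset Strict Implicit. Unset Printing Implicit Defensive.
Import Order.TTheory GRing.Theory Num.Theory.
Local Open Scope ring_scope.

(* Every edge at u2 weighs at most e^{d(u2) Δ}, so these d(u2) edges weigh at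
   most d(u2) e^{d(u2) Δ}, where Δ = d(u) is the maximum degree.  After the
   move no degree except d(u2) decreases, while d(u1) grows by one, so the
   edge u u1 alone gains at least e^{Δ (d(u1)+1)} - e^{Δ d(u1)}
   = e^{Δ d(u1)} (e^Δ - 1) > Δ e^{Δ d(u1)} >= d(u2) e^{d(u2) Δ}, using
   d(u2) <= d(u1) and d(u2) <= Δ. *)

Section RealSums.
Variables (R : realDomainType) (I : finType).

Lemma ler_sum_subset (P Q : pred I) (F : I -> R) :
  (forall i, P i -> Q i) -> (forall i, Q i -> 0 <= F i) ->
  \sum_(i | P i) F i <= \sum_(i | Q i) F i.
Proof.
move=> PQ F_ge0; rewrite [X in _ <= X](bigID P) /=.
rewrite [X in _ <= X + _](eq_bigl P); last by move=> i; apply/andb_idl/PQ.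
by rewrite lerDl sumr_ge0 // => i /andP[/F_ge0].
Qed.

Lemma ler_sum_gain (P : pred I) (F G : I -> R) (i0 : I) :
  P i0 -> (forall i, P i -> F i <= G i) ->
  \sum_(i | P i) F i + (G i0 - F i0) <= \sum_(i | P i) G i.
Proof.
move=> Pi0 FG; rewrite (bigD1 i0) //= [X in _ <= X](bigD1 i0) //=.
have : \sum_(i | P i && (i != i0)) F i <= \sum_(i | P i && (i != i0)) G i.
  by apply: ler_sum => i /andP[/FG].
lra.
Qed.

End RealSums.

Lemma lt_expR_increment (R : realType) (A a1 a2 : nat) :
  (1 <= A)%N -> (a2 <= a1)%N -> (a2 <= A)%N ->
  a2%:R * expR (a2 * A)%:R < expR (A * a1.+1)%:R - expR (A * a1)%:R :> R.
Proof.
move=> A_gt0 a21 a2A; rewrite mulnS natrD expRD.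
have le_exp : expR (a2 * A)%:R <= expR (A * a1)%:R :> R.
  by rewrite ler_expR ler_nat mulnC leq_mul.
have gt_exp : 1 + A%:R < expR A%:R :> R by apply: expR_gt1Dx; rewrite pnatr_eq0 -lt0n.
have le_a2 : a2%:R <= A%:R :> R by rewrite ler_nat.
have pos_exp : 0 < expR (A * a1)%:R :> R := expR_gt0 _.
set X := expR (A * a1)%:R in le_exp pos_exp *; set Y := expR (a2 * A)%:R in le_exp *.
have : a2%:R * Y <= a2%:R * X by rewrite ler_wpM2l.
have : a2%:R * X < (expR A%:R - 1) * X by rewrite ltr_pM2r //; lra.
lra.
Qed.

Definition edge_weight (R : realType) (V : finType) (E : {set {set V}})
    (e : {set V}) : R :=
  expR (\prod_(v in e) deg E v)%N%:R.

Lemma eM2E (R : realType) (V : finType) (E : {set {set V}}) :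
  eM2 R E = \sum_(e in E) edge_weight R E e.
Proof. by []. Qed.

Lemma adj_sym (V : finType) (E : {set {set V}}) x y : adj E x y = adj E y x.
Proof. by rewrite /adj eq_sym setUC. Qed.

Section SimpleGraph.
Variables (V : finType) (E : {set {set V}}).

Lemma edge_weight2 (R : realType) x y : x != y ->
  edge_weight R E [set x; y] = expR (deg E x * deg E y)%N%:R.
Proof. by move=> xy; rewrite /edge_weight big_setU1 ?big_set1 // inE. Qed.

Lemma deg1_adj_uniq w x y : deg E w = 1%N -> adj E w x -> adj E w y -> x = y.
Proof.
move=> /eqP/cards1P[e0 edges_w] /andP[wx wxE] /andP[wy wyE].
have /[!edges_w] /[!inE] /eqP wxe0 : [set w; x] \in [set e in E | w \in e].
  by rewrite inE wxE set21.
have /[!edges_w] /[!inE] /eqP wye0 : [set w; y] \in [set e in E | w \in e].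
  by rewrite inE wyE set21.
have : x \in [set w; y] by rewrite wye0 -wxe0 set22.
by rewrite !inE eq_sym (negbTE wx) => /eqP.
Qed.

Hypothesis simpleE : simple_edges E.

Lemma simple_edge_at e z : e \in E -> z \in e -> exists2 y, y != z & e = [set z; y].
Proof.
move=> eE; have /eqP/cards2P[a [b [ab ->]]] := simpleE eE.
rewrite !inE => /orP[] /eqP ->; first by exists b; rewrite // eq_sym.
by exists a; rewrite // setUC.
Qed.

Lemma deg_adj v : deg E v = #|[set x | adj E v x]|.
Proof.
rewrite /deg.
have -> : [set e in E | v \in e] = (fun x => [set v; x]) @: [set x | adj E v x].
  apply/setP => e; rewrite inE; apply/andP/imsetP => [[eE ve]|[x]].
    have [x xv ev] := simple_edge_at eE ve.
    by exists x; rewrite // inE /adj eq_sym xv -ev eE.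
  by rewrite inE => /andP[_ vxE] ->; rewrite vxE set21.
apply: card_in_imset => x y; rewrite !inE => /andP[vx _] _ vxy.
have : x \in [set v; y] by rewrite -vxy set22.
by rewrite !inE eq_sym (negbTE vx) => /eqP.
Qed.

Lemma deg_adj_neq x u : adj E x u -> deg E x = #|[set y | adj E x y & y != u]|.+1.
Proof.
move=> xu; rewrite deg_adj.
have -> : [set y | adj E x y] = u |: [set y | adj E x y & y != u].
  by apply/setP => y; rewrite !inE; case: eqVneq => [->|]; rewrite ?xu ?andbT.
by rewrite cardsU1 !inE eqxx andbF.
Qed.

Lemma sum_edge_weight_at_le (R : realType) (D : nat) x :
  (forall v, (deg E v <= D)%N) ->
  \sum_(e in E | x \in e) edge_weight R E e <= (deg E x)%:R * expR (deg E x * D)%N%:R.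
Proof.
move=> le_D; rewrite -big_set /=.
apply: le_trans (_ : \sum_(e in [set e in E | x \in e]) expR (deg E x * D)%N%:R <= _).
  apply: ler_sum => e; rewrite inE => /andP[eE xe].
  have [y yx ->] := simple_edge_at eE xe.
  by rewrite edge_weight2 1?eq_sym // ler_expR ler_nat leq_mul.
by rewrite sumr_const mulr_natl.
Qed.

End SimpleGraph.

Section MoveEdge.
Variables (V : finType) (E : {set {set V}}) (a b w : V).

Definition move_edge : {set {set V}} := E :\ [set a; w] :|: [set [set b; w]].

Lemma mem_move_edge e : e \in E -> e != [set a; w] -> e \in move_edge.
Proof. by move=> eE ne; rewrite !inE eE ne. Qed.

Lemma deg_move_edge_le v : v != a -> [set b; w] \notin E -> (deg E v <= deg move_edge v)%N.
Proof.
move=> va bwE; rewrite /deg.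
have [->|vw] := eqVneq v w.
  set S := [set e in E | w \in e] :\ [set a; w].
  have bwS : [set b; w] \notin S by rewrite !inE (negbTE bwE) !andbF.
  rewrite (cardsD1 [set a; w]) -/S.
  apply: leq_trans (_ : #|[set b; w] |: S| <= _)%N.
    by rewrite cardsU1 bwS leq_add2r leq_b1.
  apply/subset_leq_card/subsetP => e; rewrite !inE => /orP[/eqP ->|].
    by rewrite eqxx set22 orbT.
  by case/and3P => ne eE we; rewrite eE ne we.
apply/subset_leq_card/subsetP => e /setIdP[eE ve].
apply/setIdP; split=> //; apply: mem_move_edge eE _; apply: contraTneq ve => ->.
by rewrite !inE negb_or va vw.
Qed.

Lemma deg_move_edge_lt : b != a -> b != w -> [set b; w] \notin E ->
  (deg E b < deg move_edge b)%N.
Proof.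
move=> ba bw bwE; rewrite /deg; set S := [set e in E | b \in e].
have bwS : [set b; w] \notin S by rewrite inE (negbTE bwE).
apply: leq_trans (_ : #|[set b; w] |: S| <= _)%N; first by rewrite cardsU1 bwS.
apply/subset_leq_card/subsetP => e; rewrite in_setU1 => /predU1P[->|/setIdP[eE be]].
  by rewrite !inE !eqxx !orbT.
apply/setIdP; split=> //; apply: mem_move_edge eE _; apply: contraTneq be => ->.
by rewrite !inE negb_or ba bw.
Qed.

Lemma eM2_move_edge_ge (R : realType) e0 : [set b; w] \notin E ->
  e0 \in E -> a \notin e0 ->
  \sum_(e in E | a \notin e) edge_weight R E e
    + (edge_weight R move_edge e0 - edge_weight R E e0) <= eM2 R move_edge.
Proof.
move=> bwE e0E ae0; rewrite eM2E; apply: le_trans (ler_sum_subset _ _) => /=.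
- apply: ler_sum_gain => [|e /andP[_ ae]]; first by rewrite e0E.
  rewrite /edge_weight ler_expR ler_nat; apply: leq_prod => v ve.
  by apply: deg_move_edge_le bwE; apply: contraNneq ae => <-.
- move=> e /andP[eE ae]; apply: mem_move_edge eE _.
  by apply: contraNneq ae => ->; rewrite set21.
- by move=> e _; apply: expR_ge0.
Qed.

End MoveEdge.

Theorem lemma2 (R : realType) (V : finType) (n : nat) (E : {set {set V}})
    (u u1 u2 w : V) (d1 d2 : nat) :
  is_tree E ->
  #|V| = n ->
  (forall v : V, (deg E v <= deg E u)%N) ->
  u1 != u2 ->
  adj E u u1 -> adj E u u2 ->
  #|[set x | adj E u1 x & x != u]| = d1 ->
  (forall x, adj E u1 x -> x != u -> deg E x = 1%N) ->
  #|[set x | adj E u2 x & x != u]| = d2 ->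
  (forall x, adj E u2 x -> x != u -> deg E x = 1%N) ->
  adj E u2 w -> deg E w = 1%N ->
  (d2 <= d1)%N -> (1 <= d2)%N ->
  eM2 R E < eM2 R ((E :\ [set u2; w]) :|: [set [set u1; w]]).
Proof.
move=> [simpleE _ _] _ deg_max u1u2 uu1 uu2 card_d1 _ card_d2 _ u2w deg_w d21 d2_gt0.
have deg_u1 : deg E u1 = d1.+1 by rewrite (deg_adj_neq simpleE (u := u)) ?card_d1 // adj_sym.
have deg_u2 : deg E u2 = d2.+1 by rewrite (deg_adj_neq simpleE (u := u)) ?card_d2 // adj_sym.
have u1w : u1 != w.
  apply/eqP => u1_w; have d1_gt0 : (0 < d1)%N := leq_trans d2_gt0 d21.
  by move: deg_w; rewrite -u1_w deg_u1 => -[d1_0]; rewrite d1_0 in d1_gt0.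
have u1wE : [set u1; w] \notin E.
  apply: contra u1u2 => u1wE; apply/eqP/(deg1_adj_uniq deg_w).
    by rewrite adj_sym /adj u1w u1wE.
  by rewrite adj_sym.
have /andP[u_u1 uu1E] := uu1; have /andP[u_u2 _] := uu2.
change (eM2 R E < eM2 R (move_edge E u2 u1 w)); set E' := move_edge E u2 u1 w.
have gain : (deg E u2)%:R * expR (deg E u2 * deg E u)%N%:R
    < edge_weight R E' [set u; u1] - edge_weight R E [set u; u1].
  have A_gt0 : (1 <= deg E u)%N by apply: leq_trans (deg_max u1); rewrite deg_u1.
  have a21 : (deg E u2 <= deg E u1)%N by rewrite deg_u1 deg_u2.
  rewrite !edge_weight2 //.
  apply: lt_le_trans (lt_expR_increment R A_gt0 a21 (deg_max u2)) _.
  rewrite lerD2r ler_expR ler_nat leq_mul ?deg_move_edge_le ?deg_move_edge_lt //.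
have u2_uu1 : u2 \notin [set u; u1] by rewrite !inE negb_or !(eq_sym u2) u_u2 u1u2.
have := eM2_move_edge_ge R u1wE uu1E u2_uu1.
have := sum_edge_weight_at_le simpleE R u2 deg_max.
rewrite eM2E [X in X < _](bigID (fun e : {set V} => u2 \in e)) /=.
lra.
Qed.
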